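(* Assume $\eta_{\rm ch}^{\rm EES}\eta_{\rm dch}^{\rm EES}<1$ and $\eta_{\rm ch}^{\rm TES}\eta_{\rm dch}^{\rm TES}<1$. Let $X^*$ be an optimal solution of $\mathbf{P2}$ (components denoted with a superscript $*$) such that for every $t\in\mathcal T$ $$\frac{P_t^{\rm res}-P_t^{\rm curt*}}{1-\eta_{\rm ch}^{\rm EES}\eta_{\rm dch}^{\rm EES}}\;\ge\;\min\!\left(P_{\mathrm{ch},t}^{\rm EES*},\ \frac{P_{\mathrm{dch},t}^{\rm EES*}}{\eta_{\rm ch}^{\rm EES}\eta_{\rm dch}^{\rm EES}}\right).$$ Let $\widetilde X^*$ be obtained from $X^*$ by applying, at every $t\in\mathcal T$, the EES equivalent-energy-change (EEC) transform together with the replacement $P_t^{\rm curt*}\mapsto\widetilde P_t^{\rm curt*}=P_t^{\rm curt*}+\Delta P_t^{\rm EES}$, and the TES EEC transform together with the replacement $H_t^{\rm curt*}\mapsto\widetilde H_t^{\rm curt*}=H_t^{\rm curt*}+\Delta H_t^{\rm TES}$ (all other components unchanged). Then $\widetilde X^*$ is an optimal solution of $\mathbf{P1}$, and the optimal values of $\mathbf{P1}$ and $\mathbf{P2}$ coincide.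
   Context: Fix a multi-energy system (MES) and a rolling optimization horizon of periods $t\in\mathcal T=\{t_{\rm c},t_{\rm c}+1,\dots,t_{\rm e}\}$, each of length $\Delta T>0$. Given real data: electricity prices $\mu_{\mathrm{e},t}$ and gas prices $\mu_{\mathrm{g},t}$; forecast renewable (RES) output $P_t^{\mathrm{res}}\ge 0$; fixed electric and thermal loads $L_{\mathrm{e},t},L_{\mathrm{th},t}$; conversion efficiencies $\eta_{\rm ge}^{\rm CHP},\eta_{\rm gth}^{\rm CHP},\eta_{\rm gth}^{\rm GF},\eta_{\rm eth}^{\rm EB}>0$; storage efficiencies $\eta_{\rm ch}^{\rm EES},\eta_{\rm dch}^{\rm EES},\eta_{\rm ch}^{\rm TES},\eta_{\rm dch}^{\rm TES}\in(0,1]$; self-discharge rates $\alpha^{\rm EES},\alpha^{\rm TES}$; current storage energies $E_{t_{\rm c}}^{\rm EES},E_{t_{\rm c}}^{\rm TES}$; and the bounds listed below. Decision variables for each $t\in\mathcal T$: $P_t$ (power imported from the grid; $P_t<0$ means export), gas inputs $G_t^{\rm CHP},G_t^{\rm GF}$, electric boiler input $P_t^{\rm EB}$, electric storage (EES) charging/discharging powers $P_{\mathrm{ch},t}^{\rm EES},P_{\mathrm{dch},t}^{\rm EES}$, thermal storage (TES) charging/discharging amounts $H_{\mathrm{ch},t}^{\rm TES},H_{\mathrm{dch},t}^{\rm TES}$, curtailed RES power $P_t^{\rm curt}$ and curtailed heat $H_t^{\rm curt}$, shiftable loads $L_{\mathrm{e},t}^{\rm sl},L_{\mathrm{th},t}^{\rm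 sl}$. Per-period cost: $F_t=\mu_{\mathrm{e},t}P_t+\mu_{\mathrm{g},t}(G_t^{\rm CHP}+G_t^{\rm GF})$. Define $\Delta E_t^{\rm EES}=\Delta T\,(\eta_{\rm ch}^{\rm EES}P_{\mathrm{ch},t}^{\rm EES}-P_{\mathrm{dch},t}^{\rm EES}/\eta_{\rm dch}^{\rm EES})$ and $\Delta E_t^{\rm TES}=\Delta T\,(\eta_{\rm ch}^{\rm TES}H_{\mathrm{ch},t}^{\rm TES}-H_{\mathrm{dch},t}^{\rm TES}/\eta_{\rm dch}^{\rm TES})$. Constraints (for all $t\in\mathcal T$ unless stated otherwise): (C1) electric balance: $P_t+P_t^{\rm res}+\eta_{\rm ge}^{\rm CHP}G_t^{\rm CHP}-P_t^{\rm EB}+P_{\mathrm{dch},t}^{\rm EES}-P_{\mathrm{ch},t}^{\rm EES}-P_t^{\rm curt}=L_{\mathrm{e},t}^{\rm sl}+L_{\mathrm{e},t}$; (C2) thermal balance: $\eta_{\rm gth}^{\rm CHP}G_t^{\rm CHP}+\eta_{\rm gth}^{\rm GF}G_t^{\rm GF}+\eta_{\rm eth}^{\rm EB}P_t^{\rm EB}+H_{\mathrm{dch},t}^{\rm TES}-H_{\mathrm{ch},t}^{\rm TES}-H_t^{\rm curt}=L_{\mathrm{th},t}^{\rm sl}+L_{\mathrm{th},t}$; (C3) $-\overline P^{\rm out}\le P_t\le\overline P^{\rm in}$ with $\overline P^{\rm out},\overline P^{\rm in}>0$; (C4) $\underline P^{\rm CHP}\le\eta_{\rm ge}^{\rm CHP}G_t^{\rm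 CHP}\le\overline P^{\rm CHP}$, $\underline P^{\rm GF}\le\eta_{\rm gth}^{\rm GF}G_t^{\rm GF}\le\overline P^{\rm GF}$, $\underline P^{\rm EB}\le P_t^{\rm EB}\le\overline P^{\rm EB}$; (C5) ramping, for $t,t+1\in\mathcal T$: $|\eta_{\rm ge}^{\rm CHP}(G_{t+1}^{\rm CHP}-G_t^{\rm CHP})|\le\Delta P^{\rm CHP}$, $|P_{t+1}^{\rm EB}-P_t^{\rm EB}|\le\Delta P^{\rm EB}$; (C6) $0\le P_{\mathrm{ch},t}^{\rm EES}\le\overline P_{\rm ch}^{\rm EES}$, $0\le P_{\mathrm{dch},t}^{\rm EES}\le\overline P_{\rm dch}^{\rm EES}$, $0\le H_{\mathrm{ch},t}^{\rm TES}\le\overline H_{\rm ch}^{\rm TES}$, $0\le H_{\mathrm{dch},t}^{\rm TES}\le\overline H_{\rm dch}^{\rm TES}$; (C7) complementarity: $P_{\mathrm{ch},t}^{\rm EES}P_{\mathrm{dch},t}^{\rm EES}=0$ and $H_{\mathrm{ch},t}^{\rm TES}H_{\mathrm{dch},t}^{\rm TES}=0$; (C8) shiftable loads, for given subsets $\Omega_{\rm e},\Omega_{\rm th}$ of periods and given totals/upper limits: $\sum_{t\in\Omega_{\rm e}}L_{\mathrm{e},t}^{\rm sl}=L_{\rm e}^{\rm sl}$, $0\le L_{\mathrm{e},t}^{\rm sl}\le\overline L_{\rm e}^{\rm sl}$ for $t\in\Omega_{\rm e}$; $\sum_{t\in\Omega_{\rm th}}L_{\mathrm{th},t}^{\rm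 sl}=L_{\rm th}^{\rm sl}$, $0\le L_{\mathrm{th},t}^{\rm sl}\le\overline L_{\rm th}^{\rm sl}$ for $t\in\Omega_{\rm th}$; (C9) $0\le P_t^{\rm curt}\le P_t^{\rm res}$ and $0\le H_t^{\rm curt}$; (C10) energy bounds: $\underline E^{\rm EES}\le(1-\alpha^{\rm EES})E_{t_{\rm c}}^{\rm EES}+\sum_{\tau=t_{\rm c}}^{t}\Delta E_\tau^{\rm EES}\le\overline E^{\rm EES}$ and $\underline E^{\rm TES}\le(1-\alpha^{\rm TES})E_{t_{\rm c}}^{\rm TES}+\sum_{\tau=t_{\rm c}}^{t}\Delta E_\tau^{\rm TES}\le\overline E^{\rm TES}$; (C11) target energy: $E_{t_{\rm c}}^{\rm EES}+\sum_{\tau=t_{\rm c}}^{t_{\rm e}}\Delta E_\tau^{\rm EES}=E_{\rm targ}^{\rm EES}$ and $E_{t_{\rm c}}^{\rm TES}+\sum_{\tau=t_{\rm c}}^{t_{\rm e}}\Delta E_\tau^{\rm TES}=E_{\rm targ}^{\rm TES}$. Problem $\mathbf{P1}$: minimize $\sum_{t\in\mathcal T}F_t$ subject to (C1)–(C11). Problem $\mathbf{P2}$ (the relaxation): minimize $\sum_{t\in\mathcal T}F_t$ subject to (C1)–(C6) and (C8)–(C11), i.e. $\mathbf{P1}$ with the complementarity constraints (C7) removed; $\mathbf{P2}$ is a linear program. EEC transform for the EES at period $t$: given $(P_{\mathrm{ch},t}^{\rm EES*},P_{\mathrm{dch},t}^{\rm EES*})$ with energy change $\Delta E_t^{\rm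 EES*}$ (computed by the formula above), set $(\widetilde P_{\mathrm{ch},t}^{\rm EES*},\widetilde P_{\mathrm{dch},t}^{\rm EES*})=\big(\Delta E_t^{\rm EES*}/(\eta_{\rm ch}^{\rm EES}\Delta T),\,0\big)$ if $\Delta E_t^{\rm EES*}\ge0$, and $=\big(0,\,-\Delta E_t^{\rm EES*}\eta_{\rm dch}^{\rm EES}/\Delta T\big)$ if $\Delta E_t^{\rm EES*}<0$; and let $\Delta P_t^{\rm EES}=(\widetilde P_{\mathrm{dch},t}^{\rm EES*}-\widetilde P_{\mathrm{ch},t}^{\rm EES*})-(P_{\mathrm{dch},t}^{\rm EES*}-P_{\mathrm{ch},t}^{\rm EES*})$ be the resulting change of net discharge power. The TES EEC transform is defined identically with $H_{\mathrm{ch},t}^{\rm TES*},H_{\mathrm{dch},t}^{\rm TES*},\Delta E_t^{\rm TES*},\eta_{\rm ch}^{\rm TES},\eta_{\rm dch}^{\rm TES}$ in place of the EES quantities, producing $\widetilde H_{\mathrm{ch},t}^{\rm TES*},\widetilde H_{\mathrm{dch},t}^{\rm TES*}$, with $\Delta H_t^{\rm TES}=(\widetilde H_{\mathrm{dch},t}^{\rm TES*}-\widetilde H_{\mathrm{ch},t}^{\rm TES*})-(H_{\mathrm{dch},t}^{\rm TES*}-H_{\mathrm{ch},t}^{\rm TES*})$. *)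

From Stdlib Require Import Reals Lra Lia.
Open Scope R_scope.

Record Data := mkData {
  t_c : nat; t_e : nat; dT : R;
  mu_e : nat -> R; mu_g : nat -> R;
  Pres : nat -> R; Le : nat -> R; Lth : nat -> R;
  eta_ge_CHP : R; eta_gth_CHP : R; eta_gth_GF : R; eta_eth_EB : R;
  eta_ch_EES : R; eta_dch_EES : R; eta_ch_TES : R; eta_dch_TES : R;
  alpha_EES : R; alpha_TES : R; E0_EES : R; E0_TES : R;
  Pout_max : R; Pin_max : R;
  PCHP_min : R; PCHP_max : R; PGF_min : R; PGF_max : R; PEB_min : R; PEB_max : R;
  dP_CHP : R; dP_EB : R;
  Pch_EES_max : R; Pdch_EES_max : R; Hch_TES_max : R; Hdch_TES_max : R;
  Omega_e : nat -> bool; Omega_th : nat -> bool;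
  Lsl_e_tot : R; Lsl_e_max : R; Lsl_th_tot : R; Lsl_th_max : R;
  E_EES_min : R; E_EES_max : R; E_TES_min : R; E_TES_max : R;
  E_EES_targ : R; E_TES_targ : R }.

Definition data_ok (d : Data) : Prop :=
  (t_c d <= t_e d)%nat /\ 0 < dT d /\
  (forall t, (t_c d <= t <= t_e d)%nat -> 0 <= Pres d t) /\
  0 < eta_ge_CHP d /\ 0 < eta_gth_CHP d /\ 0 < eta_gth_GF d /\ 0 < eta_eth_EB d /\
  0 < eta_ch_EES d <= 1 /\ 0 < eta_dch_EES d <= 1 /\
  0 < eta_ch_TES d <= 1 /\ 0 < eta_dch_TES d <= 1 /\
  0 < Pout_max d /\ 0 < Pin_max d.

Record Sol := mkSol {
  P : nat -> R; G_CHP : nat -> R; G_GF : nat -> R; P_EB : nat -> R;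
  Pch : nat -> R; Pdch : nat -> R; Hch : nat -> R; Hdch : nat -> R;
  Pcurt : nat -> R; Hcurt : nat -> R; Lsl_e : nat -> R; Lsl_th : nat -> R }.

Definition inT (d : Data) (t : nat) : Prop := (t_c d <= t <= t_e d)%nat.

Definition seg_sum (f : nat -> R) (a n : nat) : R :=
  sum_f_R0 (fun k => f (a + k)%nat) n.

Definition sum_upto (d : Data) (f : nat -> R) (t : nat) : R :=
  seg_sum f (t_c d) (t - t_c d).

Definition sum_T (d : Data) (f : nat -> R) : R := sum_upto d f (t_e d).

Definition dE_EES (d : Data) (x : Sol) (t : nat) : R :=
  dT d * (eta_ch_EES d * Pch x t - Pdch x t / eta_dch_EES d).
Definition dE_TES (d : Data) (x : Sol) (t : nat) : R :=
  dT d * (eta_ch_TES d * Hch x t - Hdch x t / eta_dch_TES d).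

Definition F (d : Data) (x : Sol) (t : nat) : R :=
  mu_e d t * P x t + mu_g d t * (G_CHP x t + G_GF x t).

Definition cost (d : Data) (x : Sol) : R := sum_T d (F d x).

Definition feasible_P2 (d : Data) (x : Sol) : Prop :=
  (forall t, inT d t ->
     P x t + Pres d t + eta_ge_CHP d * G_CHP x t - P_EB x t + Pdch x t - Pch x t
       - Pcurt x t = Lsl_e x t + Le d t) /\
  (forall t, inT d t ->
     eta_gth_CHP d * G_CHP x t + eta_gth_GF d * G_GF x t + eta_eth_EB d * P_EB x t
       + Hdch x t - Hch x t - Hcurt x t = Lsl_th x t + Lth d t) /\
  (forall t, inT d t -> - Pout_max d <= P x t <= Pin_max d) /\
  (forall t, inT d t ->
     PCHP_min d <= eta_ge_CHP d * G_CHP x t <= PCHP_max d /\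
     PGF_min d <= eta_gth_GF d * G_GF x t <= PGF_max d /\
     PEB_min d <= P_EB x t <= PEB_max d) /\
  (forall t, inT d t -> inT d (S t) ->
     Rabs (eta_ge_CHP d * (G_CHP x (S t) - G_CHP x t)) <= dP_CHP d /\
     Rabs (P_EB x (S t) - P_EB x t) <= dP_EB d) /\
  (forall t, inT d t ->
     0 <= Pch x t <= Pch_EES_max d /\ 0 <= Pdch x t <= Pdch_EES_max d /\
     0 <= Hch x t <= Hch_TES_max d /\ 0 <= Hdch x t <= Hdch_TES_max d) /\
  sum_T d (fun t => if Omega_e d t then Lsl_e x t else 0) = Lsl_e_tot d /\
  (forall t, inT d t -> Omega_e d t = true -> 0 <= Lsl_e x t <= Lsl_e_max d) /\
  sum_T d (fun t => if Omega_th d t then Lsl_th x t else 0) = Lsl_th_tot d /\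
  (forall t, inT d t -> Omega_th d t = true -> 0 <= Lsl_th x t <= Lsl_th_max d) /\
  (forall t, inT d t -> 0 <= Pcurt x t <= Pres d t /\ 0 <= Hcurt x t) /\
  (forall t, inT d t ->
     E_EES_min d <= (1 - alpha_EES d) * E0_EES d + sum_upto d (dE_EES d x) t
       <= E_EES_max d /\
     E_TES_min d <= (1 - alpha_TES d) * E0_TES d + sum_upto d (dE_TES d x) t
       <= E_TES_max d) /\
  E0_EES d + sum_T d (dE_EES d x) = E_EES_targ d /\
  E0_TES d + sum_T d (dE_TES d x) = E_TES_targ d.

Definition complementarity (d : Data) (x : Sol) : Prop :=
  forall t, inT d t -> Pch x t * Pdch x t = 0 /\ Hch x t * Hdch x t = 0.

Definition feasible_P1 (d : Data) (x : Sol) : Prop :=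
  feasible_P2 d x /\ complementarity d x.

Definition optimal_P2 (d : Data) (x : Sol) : Prop :=
  feasible_P2 d x /\ forall y, feasible_P2 d y -> cost d x <= cost d y.

Definition optimal_P1 (d : Data) (x : Sol) : Prop :=
  feasible_P1 d x /\ forall y, feasible_P1 d y -> cost d x <= cost d y.

Definition eec_dE (dt eta_ch eta_dch ch dch : R) : R :=
  dt * (eta_ch * ch - dch / eta_dch).
Definition eec_ch (dt eta_ch eta_dch ch dch : R) : R :=
  let dE := eec_dE dt eta_ch eta_dch ch dch in
  if Rle_dec 0 dE then dE / (eta_ch * dt) else 0.
Definition eec_dch (dt eta_ch eta_dch ch dch : R) : R :=
  let dE := eec_dE dt eta_ch eta_dch ch dch in
  if Rle_dec 0 dE then 0 else - dE * eta_dch / dt.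

Definition eec_delta (dt eta_ch eta_dch ch dch : R) : R :=
  (eec_dch dt eta_ch eta_dch ch dch - eec_ch dt eta_ch eta_dch ch dch)
  - (dch - ch).

Definition eec_transform (d : Data) (x : Sol) : Sol :=
  let ee t := eec_ch (dT d) (eta_ch_EES d) (eta_dch_EES d) (Pch x t) (Pdch x t) in
  let ed t := eec_dch (dT d) (eta_ch_EES d) (eta_dch_EES d) (Pch x t) (Pdch x t) in
  let eD t := eec_delta (dT d) (eta_ch_EES d) (eta_dch_EES d) (Pch x t) (Pdch x t) in
  let te t := eec_ch (dT d) (eta_ch_TES d) (eta_dch_TES d) (Hch x t) (Hdch x t) in
  let td t := eec_dch (dT d) (eta_ch_TES d) (eta_dch_TES d) (Hch x t) (Hdch x t) in
  let tD t := eec_delta (dT d) (eta_ch_TES d) (eta_dch_TES d) (Hch x t) (Hdch x t) in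
  {| P := P x; G_CHP := G_CHP x; G_GF := G_GF x; P_EB := P_EB x;
     Pch := ee; Pdch := ed; Hch := te; Hdch := td;
     Pcurt := fun t => Pcurt x t + eD t;
     Hcurt := fun t => Hcurt x t + tD t;
     Lsl_e := Lsl_e x; Lsl_th := Lsl_th x |}.

(* With q = dch / (ec ed), the EEC transform of a pair (ch, dch) is (ch - q, 0)
   when q <= ch and (0, dch - ec ed ch) otherwise: it keeps the energy change,
   never increases either power, and raises the net discharge by exactly
   (1 - ec ed) min(ch, q) >= 0, which is absorbed by curtailment.  Stored
   energies, grid power and gas inputs are unchanged, so the cost and all
   energy constraints are preserved; the hypothesis on the renewable surplus
   is exactly what keeps the larger electric curtailment below P_res, while
   heat curtailment has no upper bound.  The transform of a P2-optimum is thus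
   P1-feasible at the same cost, hence P1-optimal since P1 restricts P2. *)

From Stdlib Require Import Reals Lra FunctionalExtensionality.
Open Scope R_scope.

Lemma eec_complementary dt ec ed ch dch :
  eec_ch dt ec ed ch dch * eec_dch dt ec ed ch dch = 0.
Proof. unfold eec_ch, eec_dch; destruct Rle_dec; ring. Qed.

Section EecTransform.

Variables dt ec ed : R.
Hypothesis dt_gt0 : 0 < dt.
Hypothesis ec_gt0 : 0 < ec.
Hypothesis ed_gt0 : 0 < ed.

Lemma eec_spec ch dch :
  let q := dch / (ec * ed) in
  (q <= ch /\ eec_ch dt ec ed ch dch = ch - q /\ eec_dch dt ec ed ch dch = 0) \/
  (ch < q /\ eec_ch dt ec ed ch dch = 0 /\
   eec_dch dt ec ed ch dch = dch - ec * ed * ch).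
Proof.
  intro q.
  assert (dE_eq : eec_dE dt ec ed ch dch = dt * ec * (ch - q))
    by (unfold eec_dE, q; field; lra).
  assert (dtec_gt0 : 0 < dt * ec) by (apply Rmult_lt_0_compat; lra).
  unfold eec_ch, eec_dch; destruct Rle_dec as [dE_ge0 | dE_lt0].
  - left; rewrite dE_eq in dE_ge0 |- *.
    assert (q <= ch).
    { apply Rmult_le_reg_l with (dt * ec); lra. }
    repeat split; [lra | field; lra].
  - right; rewrite dE_eq in dE_lt0 |- *.
    assert (ch < q).
    { apply Rnot_le_lt in dE_lt0.
      apply Rmult_lt_reg_l with (dt * ec); lra. }
    repeat split; [lra | unfold q; field; lra].
Qed.

Lemma eec_dE_invariant ch dch :
  eec_dE dt ec ed (eec_ch dt ec ed ch dch) (eec_dch dt ec ed ch dch)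
  = eec_dE dt ec ed ch dch.
Proof.
  destruct (eec_spec ch dch) as [(_ & -> & ->) | (_ & -> & ->)];
    unfold eec_dE; field; lra.
Qed.

Lemma eec_delta_min ch dch :
  eec_delta dt ec ed ch dch = (1 - ec * ed) * Rmin ch (dch / (ec * ed)).
Proof.
  unfold eec_delta; destruct (eec_spec ch dch) as [(q_le & -> & ->) | (q_gt & -> & ->)].
  - rewrite Rmin_right by lra; field; lra.
  - rewrite Rmin_left by lra; ring.
Qed.

Lemma eec_threshold_ge0 dch : 0 <= dch -> 0 <= dch / (ec * ed).
Proof.
  intro dch_ge0; unfold Rdiv; apply Rmult_le_pos; [exact dch_ge0 |].
  apply Rlt_le, Rinv_0_lt_compat, Rmult_lt_0_compat; assumption.
Qed.

Lemma eec_ch_dch_bounds ch dch : 0 <= ch -> 0 <= dch ->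
  0 <= eec_ch dt ec ed ch dch <= ch /\ 0 <= eec_dch dt ec ed ch dch <= dch.
Proof.
  intros ch_ge0 dch_ge0.
  pose proof (eec_threshold_ge0 dch dch_ge0).
  destruct (eec_spec ch dch) as [(q_le & -> & ->) | (q_gt & -> & ->)].
  - lra.
  - assert (ec * ed * ch < dch).
    { replace dch with (ec * ed * (dch / (ec * ed))) by (field; lra).
      apply Rmult_lt_compat_l; [apply Rmult_lt_0_compat |]; lra. }
    assert (0 <= ec * ed * ch) by (apply Rmult_le_pos; [apply Rmult_le_pos |]; lra).
    lra.
Qed.

Hypothesis eff_le1 : ec * ed <= 1.

Lemma eec_delta_ge0 ch dch : 0 <= ch -> 0 <= dch -> 0 <= eec_delta dt ec ed ch dch.
Proof.
  intros ch_ge0 dch_ge0; rewrite eec_delta_min.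
  apply Rmult_le_pos; [lra |].
  apply Rmin_glb; [exact ch_ge0 | exact (eec_threshold_ge0 dch dch_ge0)].
Qed.

End EecTransform.

Lemma add_mul_le_of_le_div (k m r c : R) :
  k < 1 -> m <= (r - c) / (1 - k) -> c + (1 - k) * m <= r.
Proof.
  intros k_lt1 m_le.
  apply Rmult_le_compat_l with (r := 1 - k) in m_le; [| lra].
  replace ((1 - k) * ((r - c) / (1 - k))) with (r - c) in m_le by (field; lra).
  lra.
Qed.

Lemma cost_eec_transform d x : cost d (eec_transform d x) = cost d x.
Proof. reflexivity. Qed.

Lemma eec_transform_complementarity d x : complementarity d (eec_transform d x).
Proof. intros t _; split; apply eec_complementary. Qed.

Section TransformFeasibility.

Variable d : Data.
Hypothesis dT_gt0 : 0 < dT d.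
Hypothesis ees_ch_gt0 : 0 < eta_ch_EES d.
Hypothesis ees_dch_gt0 : 0 < eta_dch_EES d.
Hypothesis tes_ch_gt0 : 0 < eta_ch_TES d.
Hypothesis tes_dch_gt0 : 0 < eta_dch_TES d.
Hypothesis ees_lossy : eta_ch_EES d * eta_dch_EES d < 1.
Hypothesis tes_lossy : eta_ch_TES d * eta_dch_TES d < 1.

Lemma dE_EES_eec_transform x : dE_EES d (eec_transform d x) = dE_EES d x.
Proof.
  apply functional_extensionality; intro t.
  exact (eec_dE_invariant _ _ _ dT_gt0 ees_ch_gt0 ees_dch_gt0 (Pch x t) (Pdch x t)).
Qed.

Lemma dE_TES_eec_transform x : dE_TES d (eec_transform d x) = dE_TES d x.
Proof.
  apply functional_extensionality; intro t.
  exact (eec_dE_invariant _ _ _ dT_gt0 tes_ch_gt0 tes_dch_gt0 (Hch x t) (Hdch x t)).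
Qed.

Lemma eec_transform_feasible_P2 x :
  feasible_P2 d x ->
  (forall t, inT d t ->
     (Pres d t - Pcurt x t) / (1 - eta_ch_EES d * eta_dch_EES d)
       >= Rmin (Pch x t) (Pdch x t / (eta_ch_EES d * eta_dch_EES d))) ->
  feasible_P2 d (eec_transform d x).
Proof.
  intros (C1 & C2 & C3 & C4 & C5 & C6 & C8a & C8b & C8c & C8d & C9 & C10 & C11a & C11b)
    res_surplus.
  unfold feasible_P2; rewrite dE_EES_eec_transform, dE_TES_eec_transform; simpl.
  repeat match goal with |- _ /\ _ => split end; auto.
  - intros t Ht; rewrite <- (C1 t Ht); unfold eec_delta; ring.
  - intros t Ht; rewrite <- (C2 t Ht); unfold eec_delta; ring.
  - intros t Ht.
    destruct (C6 t Ht) as ((? & ?) & (? & ?) & (? & ?) & (? & ?)).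
    destruct (eec_ch_dch_bounds (dT d) (eta_ch_EES d) (eta_dch_EES d)
                dT_gt0 ees_ch_gt0 ees_dch_gt0 (Pch x t) (Pdch x t))
      as ((? & ?) & (? & ?)); auto.
    destruct (eec_ch_dch_bounds (dT d) (eta_ch_TES d) (eta_dch_TES d)
                dT_gt0 tes_ch_gt0 tes_dch_gt0 (Hch x t) (Hdch x t))
      as ((? & ?) & (? & ?)); auto.
    repeat split; lra.
  - intros t Ht.
    destruct (C6 t Ht) as ((? & _) & (? & _) & (? & _) & (? & _)).
    destruct (C9 t Ht) as ((? & ?) & ?).
    pose proof (eec_delta_ge0 (dT d) (eta_ch_EES d) (eta_dch_EES d)
                  dT_gt0 ees_ch_gt0 ees_dch_gt0 ltac:(lra) (Pch x t) (Pdch x t)).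
    pose proof (eec_delta_ge0 (dT d) (eta_ch_TES d) (eta_dch_TES d)
                  dT_gt0 tes_ch_gt0 tes_dch_gt0 ltac:(lra) (Hch x t) (Hdch x t)).
    assert (Pcurt x t + eec_delta (dT d) (eta_ch_EES d) (eta_dch_EES d)
                          (Pch x t) (Pdch x t) <= Pres d t).
    { rewrite eec_delta_min by assumption.
      apply add_mul_le_of_le_div; [exact ees_lossy | apply Rge_le, res_surplus, Ht]. }
    repeat split; lra.
Qed.

End TransformFeasibility.

Lemma optimal_P1_of_optimal_P2 d x y :
  optimal_P2 d x -> feasible_P1 d y -> cost d y = cost d x -> optimal_P1 d y.
Proof.
  intros [_ x_min] y_feas cost_eq; split; [exact y_feas |].
  intros z [z_feas _]; rewrite cost_eq; exact (x_min z z_feas).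
Qed.

Theorem theorem2 (d : Data) (xs : Sol) :
  data_ok d ->
  eta_ch_EES d * eta_dch_EES d < 1 ->
  eta_ch_TES d * eta_dch_TES d < 1 ->
  optimal_P2 d xs ->
  (forall t, inT d t ->
     (Pres d t - Pcurt xs t) / (1 - eta_ch_EES d * eta_dch_EES d)
       >= Rmin (Pch xs t) (Pdch xs t / (eta_ch_EES d * eta_dch_EES d))) ->
  optimal_P1 d (eec_transform d xs) /\
  cost d (eec_transform d xs) = cost d xs.
Proof.
  intros data_valid ees_lossy tes_lossy xs_opt res_surplus.
  destruct data_valid as (_ & dT_gt0 & _ & _ & _ & _ & _ &
    (ees_ch_gt0 & _) & (ees_dch_gt0 & _) & (tes_ch_gt0 & _) & (tes_dch_gt0 & _) & _).
  assert (feas : feasible_P1 d (eec_transform d xs)).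
  { split.
    - apply eec_transform_feasible_P2; auto. apply xs_opt.
    - apply eec_transform_complementarity. }
  split.
  - apply optimal_P1_of_optimal_P2 with xs; auto using cost_eec_transform.
  - apply cost_eec_transform.
Qed.
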